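(* Let $\nu>0$ and $\lambda>0$. For $t>\lambda$ define $$K_1(t;\lambda)=\int_\lambda^t\frac{du}{u^{\nu+1}}\Big\{\frac{1}{(t+\lambda-u)^{\nu}}-\frac{1}{t^{\nu}}\Big\},\qquad K_2(t;\lambda)=\int_\lambda^t\frac{du}{u^{\nu+1}(t+\lambda-u)^{(2\nu)\wedge(\nu+1)}}.$$ Then (1) as $t\to\infty$, $$K_1(t;\lambda)=\frac{1}{(t+\lambda)^{2\nu}}\int_1^{t/\lambda}\frac{(v+1)^{2\nu}-v^{2\nu}}{v^{\nu+1}}\,dv+O(t^{-\nu-1});$$ (2) $\displaystyle\limsup_{t\to\infty}t^{(2\nu)\wedge(\nu+1)}K_2(t;\lambda)\le\frac{2}{\nu\lambda^{\nu}}$.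
   Context: $x\wedge y=\min\{x,y\}$. *)

From Stdlib Require Import Reals.
From Coquelicot Require Import Coquelicot.
Open Scope R_scope.

(* x ^ a for x > 0 and real a is Rpower x a. All bases below are positive
   on the integration ranges (u in [lam,t], t + lam - u in [lam,t]). *)

Definition expo (nu : R) : R := Rmin (2 * nu) (nu + 1).

Definition K1 (nu lam t : R) : R :=
  RInt (fun u => / Rpower u (nu + 1) *
                 (/ Rpower (t + lam - u) nu - / Rpower t nu)) lam t.

Definition K2 (nu lam t : R) : R :=
  RInt (fun u => / (Rpower u (nu + 1) * Rpower (t + lam - u) (expo nu))) lam t.

Definition K1_main (nu lam t : R) : R :=
  / Rpower (t + lam) (2 * nu) *
  RInt (fun v => (Rpower (v + 1) (2 * nu) - Rpower v (2 * nu)) / Rpower v (nu + 1))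
       1 (t / lam).

(* Write T = t + lam.  The substitutions u = T v / (v + 1) and u = T / (v + 1) fold the two
   halves of [lam, t] onto [1, t / lam] and give
     int_lam^t du / (u^(nu+1) (T - u)^nu) = T^(-2 nu) int_1^(t/lam) (v + 1)^(2 nu) / v^(nu+1) dv,
   so K1 minus the main term is
     T^(-2 nu) ((t/lam)^nu - 1) / nu - t^(-nu) (lam^(-nu) - t^(-nu)) / nu,
   and the two terms cancel up to O(t^(-nu-1)) because (t / T)^(2 nu) = 1 + O(1 / t).
   For K2, let q = (2 nu) /\ (nu + 1) and w = T - u.  Where u <= w,
     t^q / (u^(nu+1) w^q) <= u^(-nu-1) (1 + u / w)^q <= u^(-nu-1) (1 + c (u / T)^th)
   for a fixed th in (0, min nu 1); where u > w the same bound holds with u and w exchanged,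
   because q <= nu + 1.  Integrating, t^q K2 <= 2 int_lam^oo u^(-nu-1) du + O(T^(-th)). *)

From Stdlib Require Import Reals Lra.
From Coquelicot Require Import Coquelicot.
Open Scope R_scope.

Lemma Rpower_pos x c : 0 < Rpower x c.
Proof. apply exp_pos. Qed.

Lemma Rpower_Rinv x c : 0 < x -> Rpower (/ x) c = / Rpower x c.
Proof.
  intros Hx. unfold Rpower. rewrite ln_Rinv, <- exp_Ropp by exact Hx. f_equal; ring.
Qed.

Lemma Rpower_Rdiv x y c : 0 < x -> 0 < y -> Rpower (x / y) c = Rpower x c / Rpower y c.
Proof.
  intros Hx Hy. unfold Rdiv.
  rewrite <- Rpower_mult_distr, Rpower_Rinv by auto using Rinv_0_lt_compat. reflexivity.
Qed.

Lemma Rpower_plus_1 x c : 0 < x -> Rpower x (c + 1) = Rpower x c * x.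
Proof. intros Hx. rewrite Rpower_plus, Rpower_1 by exact Hx. reflexivity. Qed.

Lemma Rpower_double x c : Rpower x (2 * c) = Rpower x c * Rpower x c.
Proof. rewrite <- Rpower_plus. f_equal; ring. Qed.

Lemma Rpower_1_l c : Rpower 1 c = 1.
Proof. unfold Rpower. rewrite ln_1, Rmult_0_r. apply exp_0. Qed.

Lemma exp_le_compat x y : x <= y -> exp x <= exp y.
Proof. intros [Hlt | ->]; [left; apply exp_increasing |]; auto with real. Qed.

Lemma ln_le_sub_1 y : 0 < y -> ln y <= y - 1.
Proof.
  intros Hy. pose proof (exp_ineq1_le (ln y)) as Hexp. rewrite exp_ln in Hexp by exact Hy. lra.
Qed.

Lemma exp_le_1_add_mul_exp y : 0 <= y -> exp y <= 1 + y * exp y.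
Proof.
  intros Hy. pose proof (exp_ineq1_le (- y)) as Hexp. rewrite exp_Ropp in Hexp.
  pose proof (exp_pos y).
  assert (Hmul : (1 - y) * exp y <= / exp y * exp y) by (apply Rmult_le_compat_r; lra).
  rewrite Rinv_l in Hmul by lra. lra.
Qed.

Lemma Rpower_ge_self x th : 0 < x <= 1 -> 0 < th <= 1 -> x <= Rpower x th.
Proof.
  intros Hx Hth. unfold Rpower. rewrite <- (exp_ln x) at 1 by lra.
  assert (ln x <= 0) by (rewrite <- ln_1; apply ln_le; lra).
  apply exp_le_compat; nra.
Qed.

Lemma Rpower_cross_le a b p q : 0 < a <= b -> q <= p ->
  Rpower a p * Rpower b q <= Rpower b p * Rpower a q.
Proof.
  intros Hab Hpq.
  replace p with (q + (p - q)) by ring. rewrite !Rpower_plus.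
  assert (Rpower a (p - q) <= Rpower b (p - q)) by (apply Rle_Rpower_l; lra).
  pose proof (Rpower_pos a q). pose proof (Rpower_pos b q).
  assert (0 < Rpower a q * Rpower b q) by (apply Rmult_lt_0_compat; lra). nra.
Qed.

Lemma Rpower_inv_le th d x : 0 < th -> 0 < d -> Rpower d (- / th) <= x -> / Rpower x th <= d.
Proof.
  intros Hth Hd Hx.
  pose proof (Rpower_pos d (- / th)).
  assert (Hle : Rpower (Rpower d (- / th)) th <= Rpower x th) by (apply Rle_Rpower_l; lra).
  rewrite Rpower_mult in Hle.
  replace (- / th * th) with (- (1)) in Hle by (field; lra).
  rewrite Rpower_Ropp, Rpower_1 in Hle by exact Hd.
  rewrite <- (Rinv_inv d). apply Rinv_le_contravar; [apply Rinv_0_lt_compat |]; lra.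
Qed.

Lemma Rpower_one_add_inv_ge a x : 0 <= a -> 0 <= x -> 1 - a * x <= / Rpower (1 + x) a.
Proof.
  intros Ha Hx. rewrite <- Rpower_Ropp. unfold Rpower.
  pose proof (exp_ineq1_le (- a * ln (1 + x))). pose proof (ln_le_sub_1 (1 + x)). nra.
Qed.

Lemma Rpower_one_add_le q z : 0 < q -> 0 <= z <= 1 -> Rpower (1 + z) q <= 1 + q * exp q * z.
Proof.
  intros Hq Hz. unfold Rpower.
  assert (Hln : ln (1 + z) <= z) by (pose proof (ln_le_sub_1 (1 + z)); lra).
  apply Rle_trans with (exp (q * z)); [apply exp_le_compat; nra |].
  apply Rle_trans with (1 + q * z * exp (q * z)); [apply exp_le_1_add_mul_exp; nra |].
  assert (exp (q * z) <= exp q) by (apply exp_le_compat; nra).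
  assert (q * z * exp (q * z) <= q * z * exp q) by (apply Rmult_le_compat_l; nra).
  lra.
Qed.

Lemma Rpower_ratio_le q th u w : 0 < q -> 0 < th <= 1 -> 0 < u <= w ->
  Rpower ((u + w) / w) q <= 1 + 2 * q * exp q * Rpower (u / (u + w)) th.
Proof.
  intros Hq Hth Huw.
  replace ((u + w) / w) with (1 + u / w) by (field; lra).
  assert (Hz : 0 <= u / w <= 1).
  { split; [apply Rlt_le, Rdiv_lt_0_compat; lra |].
    apply Rmult_le_reg_r with w; [lra |]. field_simplify; lra. }
  assert (Hz2 : u / w <= 2 * (u / (u + w))).
  { apply Rmult_le_reg_r with (w * (u + w)); [nra |]. field_simplify; nra. }
  assert (Hs : u / (u + w) <= Rpower (u / (u + w)) th).
  { apply Rpower_ge_self; [split | exact Hth].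
    - apply Rdiv_lt_0_compat; lra.
    - apply Rmult_le_reg_r with (u + w); [lra |]. field_simplify; lra. }
  pose proof (Rpower_one_add_le q (u / w) Hq Hz).
  pose proof (exp_pos q).
  assert (0 < q * exp q) by nra.
  nra.
Qed.

Lemma is_derive_Rpower x c : 0 < x -> is_derive (fun y => Rpower y c) x (c * Rpower x (c - 1)).
Proof.
  intros Hx. unfold Rpower. auto_derive; [exact Hx|].
  replace ((c - 1) * ln x) with (c * ln x + - ln x) by ring.
  rewrite exp_plus, exp_Ropp, exp_ln by exact Hx. field. lra.
Qed.

Lemma continuous_Rpower x c : 0 < x -> continuous (fun y => Rpower y c) x.
Proof.
  intros Hx. apply (@ex_derive_continuous R_AbsRing R_NormedModule).
  eexists. apply is_derive_Rpower, Hx.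
Qed.

Lemma is_RInt_Rpower s a b : s <> 0 -> 0 < a -> 0 < b ->
  is_RInt (fun u => Rpower u (s - 1)) a b ((Rpower b s - Rpower a s) / s).
Proof.
  intros Hs Ha Hb.
  replace ((Rpower b s - Rpower a s) / s) with (Rpower b s / s - Rpower a s / s) by (field; exact Hs).
  apply (is_RInt_derive (fun u => Rpower u s / s)); intros x Hx;
    assert (0 < x) by (revert Hx; apply Rmin_case; apply Rmax_case; lra).
  - replace (Rpower x (s - 1)) with (/ s * (s * Rpower x (s - 1))) by (field; exact Hs).
    apply (is_derive_ext (fun u => / s * Rpower u s)); [intros; apply Rmult_comm |].
    apply (is_derive_scal (fun u => Rpower u s)), is_derive_Rpower; assumption.
  - apply continuous_Rpower; assumption.
Qed.

Lemma is_RInt_reflect (f : R -> R) a b l :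
  is_RInt f a b l -> is_RInt (fun u => f (a + b - u)) a b l.
Proof.
  intros Hf.
  assert (H := is_RInt_comp_lin f (-1) (a + b) a b (opp l)).
  replace (-1 * b + (a + b)) with a in H by ring.
  replace (-1 * a + (a + b)) with b in H by ring.
  specialize (H (is_RInt_swap _ _ _ _ Hf)).
  apply is_RInt_opp in H. rewrite opp_opp in H.
  refine (is_RInt_ext _ _ a b l _ H).
  intros u _. change (- (-1 * f (-1 * u + (a + b))) = f (a + b - u)).
  replace (-1 * u + (a + b)) with (a + b - u) by ring. ring.
Qed.

Lemma fold_points_bounds T v : 0 < T -> 1 <= v ->
  0 < T / (v + 1) <= T / 2 /\ T / 2 <= T * v / (v + 1) < T.
Proof.
  intros HT Hv. repeat split.
  - apply Rdiv_lt_0_compat; lra.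
  - apply Rmult_le_compat_l; [lra | apply Rinv_le_contravar; lra].
  - apply Rmult_le_reg_r with (2 * (v + 1)); [lra |].
    replace (T / 2 * (2 * (v + 1))) with (T * (v + 1)) by field.
    replace (T * v / (v + 1) * (2 * (v + 1))) with (2 * T * v) by (field; lra). nra.
  - apply Rmult_lt_reg_r with (v + 1); [lra |].
    replace (T * v / (v + 1) * (v + 1)) with (T * v) by (field; lra). nra.
Qed.

(* The substitutions u = T v / (v + 1) and u = T / (v + 1) map [1, b] onto the two halves
   of [T / (b + 1), T b / (b + 1)] on either side of T / 2. *)
Lemma is_RInt_fold (f : R -> R) T b :
  0 < T -> 1 <= b -> (forall u, 0 < u < T -> continuous f u) ->
  is_RInt (fun v => T / (v + 1) ^ 2 * (f (T * v / (v + 1)) + f (T / (v + 1)))) 1 b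
    (RInt f (T / (b + 1)) (T * b / (b + 1))).
Proof.
  intros HT Hb Hf.
  assert (Hbounds := fun v => fold_points_bounds T v HT).
  assert (Hint : forall x y, T / (b + 1) <= x <= T * b / (b + 1) ->
                 T / (b + 1) <= y <= T * b / (b + 1) -> ex_RInt f x y).
  { intros x y Hx Hy. apply (@ex_RInt_continuous R_CompleteNormedModule).
    intros z Hz. apply Hf. destruct (Hbounds b Hb).
    revert Hz; apply Rmin_case; apply Rmax_case; lra. }
  assert (Hup := is_RInt_comp f (fun v => T * v / (v + 1)) (fun v => T / (v + 1) ^ 2) 1 b).
  assert (Hdown := is_RInt_comp f (fun v => T / (v + 1)) (fun v => - (T / (v + 1) ^ 2)) 1 b).
  rewrite Rmin_left, Rmax_right in Hup, Hdown by lra. simpl in Hup, Hdown.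
  replace (T * 1 / (1 + 1)) with (T / 2) in Hup by field.
  replace (T / (1 + 1)) with (T / 2) in Hdown by field.
  specialize (Hup ltac:(intros x Hx; apply Hf; destruct (Hbounds x); lra)).
  specialize (Hdown ltac:(intros x Hx; apply Hf; destruct (Hbounds x); lra)).
  specialize (Hup ltac:(intros x Hx; split; [| apply (@ex_derive_continuous R_AbsRing R_NormedModule)];
                        auto_derive; try field; nra)).
  specialize (Hdown ltac:(intros x Hx; split; [| apply (@ex_derive_continuous R_AbsRing R_NormedModule)];
                          auto_derive; try field; nra)).
  destruct (Hbounds b Hb).
  rewrite <- (RInt_Chasles f _ (T / 2)), <- (opp_RInt_swap f (T / 2)) by (apply Hint; lra).
  refine (is_RInt_ext _ _ 1 b _ _ (is_RInt_plus _ _ _ _ _ _ (is_RInt_opp _ _ _ _ Hdown) Hup)).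
  intros v _. change (- (- (T / (v + 1) ^ 2) * f (T / (v + 1))) + T / (v + 1) ^ 2 * f (T * v / (v + 1))
                      = T / (v + 1) ^ 2 * (f (T * v / (v + 1)) + f (T / (v + 1)))).
  ring.
Qed.

Definition K1_kernel (nu T u : R) : R := / Rpower u (nu + 1) * / Rpower (T - u) nu.

Lemma continuous_K1_kernel nu T u : 0 < u < T -> continuous (K1_kernel nu T) u.
Proof.
  intros Hu. apply (@ex_derive_continuous R_AbsRing R_NormedModule).
  unfold K1_kernel, Rpower. auto_derive. repeat split; (lra || apply Rgt_not_eq, exp_pos).
Qed.

Lemma fold_K1_kernel_eq nu T v : 0 < T -> 0 < v ->
  T / (v + 1) ^ 2 * (K1_kernel nu T (T * v / (v + 1)) + K1_kernel nu T (T / (v + 1)))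
  = / Rpower T (2 * nu) * (Rpower (v + 1) (2 * nu) / Rpower v (nu + 1)).
Proof.
  intros HT Hv. unfold K1_kernel.
  replace (T - T * v / (v + 1)) with (T / (v + 1)) by (field; lra).
  replace (T - T / (v + 1)) with (T * v / (v + 1)) by (field; lra).
  rewrite !Rpower_Rdiv, <- !Rpower_mult_distr, !Rpower_plus_1, !Rpower_double by nra.
  pose proof (Rpower_pos T nu). pose proof (Rpower_pos v nu). pose proof (Rpower_pos (v + 1) nu).
  field. repeat split; lra.
Qed.

Lemma K1_main_eq nu lam t : 0 < nu -> 0 < lam < t ->
  K1_main nu lam t = RInt (K1_kernel nu (t + lam)) lam t
                     - (Rpower (t / lam) nu - 1) / (nu * Rpower (t + lam) (2 * nu)).
Proof.
  intros Hnu Ht.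
  set (T := t + lam). set (b := t / lam).
  assert (HT : 0 < T) by (unfold T; lra).
  assert (Hb : 1 <= b) by (unfold b; apply Rmult_le_reg_r with lam; [lra |]; field_simplify; lra).
  assert (Hfold := is_RInt_fold (K1_kernel nu T) T b HT Hb (continuous_K1_kernel nu T)).
  replace (T / (b + 1)) with lam in Hfold by (unfold T, b; field; lra).
  replace (T * b / (b + 1)) with t in Hfold by (unfold T, b; field; lra).
  assert (Hpow := is_RInt_Rpower nu 1 b ltac:(lra) ltac:(lra) ltac:(lra)).
  rewrite Rpower_1_l in Hpow.
  assert (Hmain : is_RInt (fun v => (Rpower (v + 1) (2 * nu) - Rpower v (2 * nu)) / Rpower v (nu + 1)) 1 b
                   (Rpower T (2 * nu) * RInt (K1_kernel nu T) lam t - (Rpower b nu - 1) / nu)).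
  { refine (is_RInt_ext _ _ 1 b _ _ (is_RInt_minus _ _ _ _ _ _
              (is_RInt_scal _ _ _ (Rpower T (2 * nu)) _ Hfold) Hpow)).
    intros v Hv. rewrite Rmin_left, Rmax_right in Hv by lra.
    change (Rpower T (2 * nu) * (T / (v + 1) ^ 2 * (K1_kernel nu T (T * v / (v + 1))
              + K1_kernel nu T (T / (v + 1)))) - Rpower v (nu - 1)
            = (Rpower (v + 1) (2 * nu) - Rpower v (2 * nu)) / Rpower v (nu + 1)).
    rewrite fold_K1_kernel_eq by lra.
    replace (Rpower v (2 * nu)) with (Rpower v (nu - 1) * Rpower v (nu + 1))
      by (rewrite <- Rpower_plus; f_equal; ring).
    pose proof (Rpower_pos T (2 * nu)). pose proof (Rpower_pos v (nu + 1)).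
    field. lra. }
  unfold K1_main. fold T b. rewrite (is_RInt_unique _ _ _ _ Hmain).
  pose proof (Rpower_pos T (2 * nu)). field. lra.
Qed.

Lemma K1_eq nu lam t : 0 < nu -> 0 < lam < t ->
  K1 nu lam t = RInt (K1_kernel nu (t + lam)) lam t
                - (/ Rpower lam nu - / Rpower t nu) / (nu * Rpower t nu).
Proof.
  intros Hnu Ht.
  assert (Hex : ex_RInt (K1_kernel nu (t + lam)) lam t).
  { apply (@ex_RInt_continuous R_CompleteNormedModule). intros u Hu.
    rewrite Rmin_left, Rmax_right in Hu by lra. apply continuous_K1_kernel. lra. }
  assert (Hinv := is_RInt_Rpower (- nu) lam t ltac:(lra) ltac:(lra) ltac:(lra)).
  assert (HK1 := is_RInt_minus _ _ _ _ _ _ (RInt_correct _ _ _ Hex)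
                   (is_RInt_scal _ _ _ (/ Rpower t nu) _ Hinv)).
  unfold K1. erewrite is_RInt_unique.
  2: { refine (is_RInt_ext _ _ lam t _ _ HK1).
       intros u Hu. rewrite Rmin_left, Rmax_right in Hu by lra.
       change (K1_kernel nu (t + lam) u - / Rpower t nu * Rpower u (- nu - 1)
               = / Rpower u (nu + 1) * (/ Rpower (t + lam - u) nu - / Rpower t nu)).
       replace (- nu - 1) with (- (nu + 1)) by ring. rewrite Rpower_Ropp.
       unfold K1_kernel. ring. }
  change (RInt (K1_kernel nu (t + lam)) lam t
          - / Rpower t nu * ((Rpower t (- nu) - Rpower lam (- nu)) / - nu)
          = RInt (K1_kernel nu (t + lam)) lam t
            - (/ Rpower lam nu - / Rpower t nu) / (nu * Rpower t nu)).
  rewrite !Rpower_Ropp. pose proof (Rpower_pos t nu). pose proof (Rpower_pos lam nu).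
  field. lra.
Qed.

Lemma K1_sub_K1_main nu lam t : 0 < nu -> 0 < lam < t ->
  K1 nu lam t - K1_main nu lam t =
  (Rpower (t / lam) nu - 1) / (nu * Rpower (t + lam) (2 * nu))
  - (/ Rpower lam nu - / Rpower t nu) / (nu * Rpower t nu).
Proof. intros Hnu Ht. rewrite K1_eq, K1_main_eq by assumption. ring. Qed.

Lemma K1_error_le nu lam t : 0 < nu -> 0 < lam < t ->
  Rabs ((Rpower (t / lam) nu - 1) / (nu * Rpower (t + lam) (2 * nu))
        - (/ Rpower lam nu - / Rpower t nu) / (nu * Rpower t nu))
  <= 2 * lam / Rpower lam nu * Rpower t (- nu - 1).
Proof.
  intros Hnu Ht.
  set (x := lam / t).
  assert (Hx : 0 < x) by (apply Rdiv_lt_0_compat; lra).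
  set (P := Rpower (1 + x) (2 * nu)).
  assert (HP1 : 1 <= P).
  { rewrite <- (Rpower_O (1 + x)) by lra. apply Rle_Rpower; lra. }
  assert (HP0 : / P <= 1) by (rewrite <- Rinv_1; apply Rinv_le_contravar; lra).
  assert (HP2 : 1 - / P <= 2 * nu * x)
    by (pose proof (Rpower_one_add_inv_ge (2 * nu) x ltac:(lra) ltac:(lra)) as HB; fold P in HB; lra).
  replace (t + lam) with (t * (1 + x)) by (unfold x; field; lra).
  replace (- nu - 1) with (- (nu + 1)) by ring.
  rewrite <- Rpower_mult_distr, Rpower_double, Rpower_Rdiv, Rpower_Ropp, Rpower_plus_1 by lra. fold P.
  pose proof (Rpower_pos t nu). pose proof (Rpower_pos lam nu).
  assert (Hle : Rpower lam nu <= Rpower t nu) by (apply Rle_Rpower_l; lra).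
  set (pt := Rpower t nu) in *. set (pl := Rpower lam nu) in *.
  replace ((pt / pl - 1) / (nu * (pt * pt * P)) - (/ pl - / pt) / (nu * pt))
    with (- ((1 - / P) * (pt - pl) / (nu * pl * pt * pt))) by (field; repeat split; lra).
  rewrite Rabs_Ropp, Rabs_right.
  2: { apply Rle_ge, Rdiv_le_0_compat; [apply Rmult_le_pos | repeat apply Rmult_lt_0_compat]; lra. }
  apply Rle_trans with (2 * nu * x * pt / (nu * pl * pt * pt)).
  - apply Rmult_le_compat_r; [left; apply Rinv_0_lt_compat; repeat apply Rmult_lt_0_compat; lra |].
    apply Rmult_le_compat; lra.
  - right. unfold x. field. repeat split; lra.
Qed.

Definition K2_majorant (nu th k u : R) : R :=
  Rpower u (- nu - 1) + k * Rpower u (- (nu - th) - 1).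

Lemma K2_majorant_nonneg nu th k u : 0 <= k -> 0 <= K2_majorant nu th k u.
Proof.
  intros Hk. unfold K2_majorant.
  pose proof (Rpower_pos u (- nu - 1)). pose proof (Rpower_pos u (- (nu - th) - 1)). nra.
Qed.

Lemma K2_kernel_le_near nu q th u w : 0 < q -> 0 < th <= 1 -> 0 < u <= w ->
  Rpower (u + w) q / (Rpower u (nu + 1) * Rpower w q)
  <= K2_majorant nu th (2 * q * exp q / Rpower (u + w) th) u.
Proof.
  intros Hq Hth Huw.
  pose proof (Rpower_ratio_le q th u w Hq Hth Huw) as Hratio.
  rewrite !Rpower_Rdiv in Hratio by lra.
  unfold K2_majorant.
  replace (- (nu - th) - 1) with (th + (- nu - 1)) by ring.
  replace (- nu - 1) with (- (nu + 1)) by ring.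
  rewrite (Rpower_plus th), Rpower_Ropp.
  pose proof (Rpower_pos u (nu + 1)). pose proof (Rpower_pos w q).
  pose proof (Rpower_pos (u + w) th).
  set (U := Rpower u (nu + 1)) in *.
  replace (Rpower (u + w) q / (U * Rpower w q)) with (/ U * (Rpower (u + w) q / Rpower w q))
    by (field; lra).
  apply Rle_trans with (/ U * (1 + 2 * q * exp q * (Rpower u th / Rpower (u + w) th))).
  - apply Rmult_le_compat_l; [left; apply Rinv_0_lt_compat |]; lra.
  - right. field. lra.
Qed.

Lemma K2_kernel_le nu q th u w : 0 < q <= nu + 1 -> 0 < th <= 1 -> 0 < u -> 0 < w ->
  let k := 2 * q * exp q / Rpower (u + w) th in
  Rpower (u + w) q / (Rpower u (nu + 1) * Rpower w q)
  <= K2_majorant nu th k u + K2_majorant nu th k w.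
Proof.
  intros Hq Hth Hu Hw k.
  assert (Hk : 0 <= k).
  { unfold k. pose proof (exp_pos q). pose proof (Rpower_pos (u + w) th).
    apply Rlt_le, Rdiv_lt_0_compat; nra. }
  destruct (Rle_lt_dec u w) as [Huw | Hwu].
  - pose proof (K2_kernel_le_near nu q th u w ltac:(lra) Hth ltac:(lra)) as Hnear.
    pose proof (K2_majorant_nonneg nu th k w Hk). fold k in Hnear. lra.
  - (* q <= nu + 1 makes the kernel larger with the roles of u and w exchanged. *)
    pose proof (K2_kernel_le_near nu q th w u ltac:(lra) Hth ltac:(lra)) as Hnear.
    rewrite Rplus_comm in Hnear. fold k in Hnear.
    pose proof (K2_majorant_nonneg nu th k u Hk).
    assert (Hcross := Rpower_cross_le w u (nu + 1) q ltac:(lra) ltac:(lra)).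
    pose proof (Rpower_pos (u + w) q). pose proof (Rpower_pos w (nu + 1)). pose proof (Rpower_pos u q).
    enough (Rpower (u + w) q / (Rpower u (nu + 1) * Rpower w q)
            <= Rpower (u + w) q / (Rpower w (nu + 1) * Rpower u q)) by lra.
    apply Rmult_le_compat_l; [lra |].
    apply Rinv_le_contravar; [apply Rmult_lt_0_compat; lra | exact Hcross].
Qed.

Lemma is_RInt_K2_majorant nu th k a b : 0 < nu -> th < nu -> 0 < a -> 0 < b ->
  is_RInt (K2_majorant nu th k) a b
    ((/ Rpower a nu - / Rpower b nu) / nu
     + k * ((/ Rpower a (nu - th) - / Rpower b (nu - th)) / (nu - th))).
Proof.
  intros Hnu Hthnu Ha Hb.
  pose proof (Rpower_pos a nu). pose proof (Rpower_pos b nu).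
  pose proof (Rpower_pos a (nu - th)). pose proof (Rpower_pos b (nu - th)).
  replace ((/ Rpower a nu - / Rpower b nu) / nu) with ((Rpower b (- nu) - Rpower a (- nu)) / - nu)
    by (rewrite !Rpower_Ropp; field; lra).
  replace ((/ Rpower a (nu - th) - / Rpower b (nu - th)) / (nu - th))
    with ((Rpower b (- (nu - th)) - Rpower a (- (nu - th))) / - (nu - th))
    by (rewrite !Rpower_Ropp; field; lra).
  apply (is_RInt_plus (fun u => Rpower u (- nu - 1)) (fun u => k * Rpower u (- (nu - th) - 1))).
  - apply is_RInt_Rpower; lra.
  - apply (is_RInt_scal (fun u => Rpower u (- (nu - th) - 1))), is_RInt_Rpower; lra.
Qed.

Lemma is_RInt_K2 nu lam t : 0 < lam < t ->
  is_RInt (fun u => / (Rpower u (nu + 1) * Rpower (t + lam - u) (expo nu))) lam t (K2 nu lam t).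
Proof.
  intros Ht.
  apply (@RInt_correct R_CompleteNormedModule), (@ex_RInt_continuous R_CompleteNormedModule).
  intros u Hu. rewrite Rmin_left, Rmax_right in Hu by lra.
  apply (@ex_derive_continuous R_AbsRing R_NormedModule).
  unfold Rpower. auto_derive. repeat split; try lra; apply Rgt_not_eq, Rmult_lt_0_compat; apply exp_pos.
Qed.

Lemma K2_le nu th lam t : 0 < nu -> 0 < th <= 1 -> th < nu -> 0 < lam < t ->
  Rpower t (expo nu) * K2 nu lam t
  <= 2 / (nu * Rpower lam nu)
     + 4 * expo nu * exp (expo nu) / ((nu - th) * Rpower lam (nu - th)) / Rpower (t + lam) th.
Proof.
  intros Hnu Hth Hthnu Ht.
  set (q := expo nu).
  assert (Hq : 0 < q <= nu + 1) by (unfold q, expo; split; [apply Rmin_case | apply Rmin_r]; lra).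
  set (k := 2 * q * exp q / Rpower (t + lam) th).
  assert (HM := is_RInt_K2_majorant nu th k lam t Hnu Hthnu ltac:(lra) ltac:(lra)).
  eapply Rle_trans.
  { refine (is_RInt_le _ _ lam t _ _ (Rlt_le _ _ (proj2 Ht))
              (is_RInt_scal _ _ _ (Rpower t q) _ (is_RInt_K2 nu lam t Ht))
              (is_RInt_plus _ _ _ _ _ _ HM (is_RInt_reflect _ _ _ _ HM)) _).
    intros u Hu.
    change (Rpower t q * / (Rpower u (nu + 1) * Rpower (t + lam - u) q)
            <= K2_majorant nu th k u + K2_majorant nu th k (lam + t - u)).
    pose proof (K2_kernel_le nu q th u (t + lam - u) Hq Hth ltac:(lra) ltac:(lra)) as Hkernel.
    replace (u + (t + lam - u)) with (t + lam) in Hkernel by ring. fold k in Hkernel.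
    replace (lam + t - u) with (t + lam - u) by ring.
    eapply Rle_trans; [| exact Hkernel].
    apply Rmult_le_compat_r.
    - left. apply Rinv_0_lt_compat, Rmult_lt_0_compat; apply Rpower_pos.
    - apply Rle_Rpower_l; lra. }
  assert (Hk : 0 < k) by (apply Rdiv_lt_0_compat; [pose proof (exp_pos q); nra | apply Rpower_pos]).
  pose proof (Rpower_pos t nu). pose proof (Rpower_pos lam nu). pose proof (Rpower_pos (t + lam) th).
  pose proof (Rpower_pos t (nu - th)). pose proof (Rpower_pos lam (nu - th)).
  assert (0 < k * (/ Rpower t (nu - th) / (nu - th)))
    by (apply Rmult_lt_0_compat; [| apply Rdiv_lt_0_compat; [apply Rinv_0_lt_compat |]]; lra).
  assert (0 < / Rpower t nu / nu) by (apply Rdiv_lt_0_compat; [apply Rinv_0_lt_compat |]; lra).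
  replace (4 * q * exp q / ((nu - th) * Rpower lam (nu - th)) / Rpower (t + lam) th)
    with (2 * (k * (/ Rpower lam (nu - th) / (nu - th)))) by (unfold k; field; lra).
  replace (2 / (nu * Rpower lam nu)) with (2 * (/ Rpower lam nu / nu)) by (field; lra).
  replace ((/ Rpower lam nu - / Rpower t nu) / nu) with (/ Rpower lam nu / nu - / Rpower t nu / nu)
    by (field; lra).
  replace ((/ Rpower lam (nu - th) - / Rpower t (nu - th)) / (nu - th))
    with (/ Rpower lam (nu - th) / (nu - th) - / Rpower t (nu - th) / (nu - th)) by (field; lra).
  unfold plus; simpl. lra.
Qed.

Lemma K2_scaled_eventually_le nu lam eps : 0 < nu -> 0 < lam -> 0 < eps ->
  exists T, lam < T /\ forall t, T <= t ->
    Rpower t (expo nu) * K2 nu lam t <= 2 / (nu * Rpower lam nu) + eps.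
Proof.
  intros Hnu Hlam Heps.
  (* Any th in (0, min nu 1) would do. *)
  set (th := nu / (nu + 1)).
  assert (Hth : 0 < th < 1) by (unfold th; split;
    [apply Rdiv_lt_0_compat | apply Rmult_lt_reg_r with (nu + 1); [| field_simplify]]; lra).
  assert (Hthnu : th < nu) by (unfold th; apply Rmult_lt_reg_r with (nu + 1); [| field_simplify]; nra).
  set (C := 4 * expo nu * exp (expo nu) / ((nu - th) * Rpower lam (nu - th))).
  assert (HC : 0 < C).
  { assert (0 < expo nu) by (unfold expo; apply Rmin_case; lra).
    pose proof (exp_pos (expo nu)). pose proof (Rpower_pos lam (nu - th)).
    unfold C. apply Rdiv_lt_0_compat; nra. }
  pose proof (Rpower_pos (eps / C) (- / th)).
  exists (lam + Rpower (eps / C) (- / th)). split; [lra |].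
  intros t Ht.
  eapply Rle_trans; [apply (K2_le nu th); lra |]. fold C.
  apply Rplus_le_compat_l.
  assert (Hdecay : / Rpower (t + lam) th <= eps / C)
    by (apply Rpower_inv_le; [lra | apply Rdiv_lt_0_compat |]; lra).
  apply Rmult_le_compat_l with (r := C) in Hdecay; [| lra].
  replace (C * (eps / C)) with eps in Hdecay by (field; lra). exact Hdecay.
Qed.

Theorem lemma3p4 (nu lam : R) (Hnu : 0 < nu) (Hlam : 0 < lam) :
  (exists C T : R, lam < T /\ forall t : R, T <= t ->
     Rabs (K1 nu lam t - K1_main nu lam t) <= C * Rpower t (- nu - 1))
  /\
  (forall eps : R, 0 < eps -> exists T : R, lam < T /\ forall t : R, T <= t ->
     Rpower t (expo nu) * K2 nu lam t <= 2 / (nu * Rpower lam nu) + eps).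
Proof.
  split.
  - exists (2 * lam / Rpower lam nu), (lam + 1). split; [lra |].
    intros t Ht. rewrite K1_sub_K1_main by lra. apply K1_error_le; lra.
  - intros eps Heps. apply K2_scaled_eventually_le; assumption.
Qed.
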